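(* Let $U=(u_{ij})\in\mathcal{U}_d(\mathbb{C})$. For every $M\in\mathbb{N}$ there exist $D_1,\dots,D_{2M}\in\mathcal{DU}_d(\mathbb{C})$ such that for all $k,l\in\{1,\dots,d\}$, $$\left((P_U^TP_U)^M\right)_{kl}=0\iff\left(D_1U^\dagger D_2U\cdots D_{2M-1}U^\dagger D_{2M}U\right)_{kl}=0.$$
   Context: $\mathcal{U}_d(\mathbb{C})$ denotes the group of $d\times d$ unitary matrices and $\mathcal{DU}_d(\mathbb{C})$ its subgroup of diagonal unitary matrices. $P_U=(p_{ij})$ is the $0/1$ matrix with $p_{ij}=0$ if $u_{ij}=0$ and $p_{ij}=1$ if $u_{ij}\neq0$. *)

From mathcomp Require Import all_boot all_order all_algebra.
Set Implicit Arguments. Unset Strict Implicit. Unset Printing Implicit Defensive.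
Import Order.TTheory GRing.Theory Num.Theory.
Local Open Scope ring_scope.

Section Defs.
Variable C : numClosedFieldType.

Definition adjmx (d : nat) (U : 'M[C]_d) : 'M[C]_d := (map_mx Num.conj U)^T.

Definition unitary_mx (d : nat) (U : 'M[C]_d) : Prop :=
  U *m adjmx U = 1%:M /\ adjmx U *m U = 1%:M.

Definition diag_unitary_mx (d : nat) (D : 'M[C]_d) : Prop :=
  (forall i j : 'I_d, i != j -> D i j = 0) /\ (forall i : 'I_d, `|D i i| = 1).

Definition pattern_mx (d : nat) (U : 'M[C]_d) : 'M[nat]_d :=
  \matrix_(i, j) (if U i j == 0 then 0%N else 1%N).

(* D_1 U^dagger D_2 U ... D_{2M-1} U^dagger D_{2M} U, with D_{k+1} = D k *)
Definition alt_prod (d : nat) (U : 'M[C]_d) (D : nat -> 'M[C]_d) (M : nat)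
  : 'M[C]_d :=
  foldr (fun i A => D (2 * i)%N *m adjmx U *m D (2 * i).+1 *m U *m A)
        1%:M (iota 0 M).
End Defs.

Definition mxpow_nat (d : nat) (A : 'M[nat]_d) (M : nat) : 'M[nat]_d :=
  iter M (fun B => B *m A) 1%:M.

From mathcomp Require Import all_boot all_order all_algebra.
From mathcomp Require Import ring zify.
Import Order.TTheory GRing.Theory Num.Theory.
Local Open Scope ring_scope.

(* The zero pattern of a product [A *m V] is in general smaller than the
   boolean product of the patterns of A and V, because of cancellations.
   Inserting [diag(1, z, ..., z^(n-1))] turns each entry of [A *m D *m V] into
   a polynomial in z whose coefficients are the products [A k a * V a l], so the
   entry vanishes identically iff the boolean product does.  The finitely many
   nonzero such polynomials have finitely many roots, while the unit circle is
   infinite (the Cayley transform n |-> (n + i)/(n - i) embeds nat into it), so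
   some unimodular z avoids all cancellations at once.  Inserting
   such diagonal matrices one factor at a time, the zero pattern of the
   alternating product follows that of the powers of [P_U^T P_U]. *)

Definition rel_comp {I J K : finType} (r : I -> J -> bool) (s : J -> K -> bool)
    : I -> K -> bool :=
  fun i k => [exists j, r i j && s j k].

Lemma eq_rel_comp {I J K : finType} {r r' : I -> J -> bool} {s s' : J -> K -> bool} :
  r =2 r' -> s =2 s' -> rel_comp r s =2 rel_comp r' s'.
Proof. by move=> er es i k; apply: eq_existsb => j; rewrite er es. Qed.

Lemma rel_compA {I J K L : finType} (r : I -> J -> bool) (s : J -> K -> bool)
    (t : K -> L -> bool) :
  rel_comp r (rel_comp s t) =2 rel_comp (rel_comp r s) t.
Proof.
move=> i l; apply/existsP/existsP.
- case=> j /andP[rij /existsP[k /andP[sjk tkl]]].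
  by exists k; rewrite tkl andbT; apply/existsP; exists j; rewrite rij.
- case=> k /andP[/existsP[j /andP[rij sjk]] tkl].
  by exists j; rewrite rij; apply/existsP; exists k; rewrite sjk.
Qed.

Definition mxsupp {R : nmodType} {m n} (A : 'M[R]_(m, n)) : 'I_m -> 'I_n -> bool :=
  fun i j => A i j != 0.

Lemma mxsupp_nat_mul {m n p} (X : 'M[nat]_(m, n)) (Y : 'M[nat]_(n, p)) :
  mxsupp (X *m Y) =2 rel_comp (mxsupp X) (mxsupp Y).
Proof.
move=> k l; apply: negb_inj; rewrite /mxsupp /rel_comp negbK !mxE.
rewrite sum_nat_eq0 negb_exists; apply: eq_forallb => a.
by rewrite muln_eq0 negb_and !negbK.
Qed.

Lemma mxsupp_pattern {C : numClosedFieldType} {d} (U : 'M[C]_d) :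
  mxsupp (pattern_mx U) =2 mxsupp U.
Proof. by move=> i j; rewrite /mxsupp mxE; case: (U i j == 0). Qed.

Lemma mxsupp_adj {C : numClosedFieldType} {d} (U : 'M[C]_d) :
  mxsupp (adjmx U) =2 fun i j => mxsupp U j i.
Proof. by move=> i j; rewrite /mxsupp !mxE conjC_eq0. Qed.

Lemma mxsupp_pattern_gram {C : numClosedFieldType} {d} (U : 'M[C]_d) :
  mxsupp ((pattern_mx U)^T *m pattern_mx U) =2 rel_comp (mxsupp (adjmx U)) (mxsupp U).
Proof.
move=> i j; rewrite mxsupp_nat_mul; apply: (eq_rel_comp _ (mxsupp_pattern U)) => a b.
by rewrite mxsupp_adj -mxsupp_pattern /mxsupp mxE.
Qed.

Definition cayley (C : numClosedFieldType) (n : nat) : C := (n%:R + 'i) / (n%:R - 'i).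

Lemma natr_addi_subi_neq0 (C : numClosedFieldType) (n : nat) :
  (n%:R + 'i != 0 :> C) /\ (n%:R - 'i != 0 :> C).
Proof.
have prodE : (n%:R + 'i) * (n%:R - 'i) = (n ^ 2).+1%:R :> C.
  by rewrite -addn1 natrD natrX -[1%:R]opprK -(@sqrCi C); ring.
have : (n%:R + 'i) * (n%:R - 'i) != 0 :> C by rewrite prodE pnatr_eq0.
by rewrite mulf_eq0 negb_or => /andP.
Qed.

Lemma norm_cayley (C : numClosedFieldType) n : `|cayley C n| = 1.
Proof.
have [nz _] := natr_addi_subi_neq0 C n.
have conjE : n%:R - 'i = (n%:R + 'i : C)^* by rewrite rmorphD /= conjC_nat conjCi.
by rewrite /cayley normf_div conjE norm_conjC divff // normr_eq0.
Qed.

Lemma cayley_inj (C : numClosedFieldType) : injective (cayley C).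
Proof.
move=> n m; have [_ nzn] := natr_addi_subi_neq0 C n.
have [_ nzm] := natr_addi_subi_neq0 C m.
rewrite /cayley => /eqP; rewrite eqr_div // => /eqP e.
have : 2%:R * 'i * (m%:R - n%:R) = 0 :> C.
  by rewrite [LHS](_ : _ = (n%:R + 'i) * (m%:R - 'i) - (m%:R + 'i) * (n%:R - 'i));
    [rewrite e subrr | ring].
move/eqP; rewrite !mulf_eq0 pnatr_eq0 (negPf (neq0Ci C)) /= subr_eq0 eqr_nat.
by move/eqP.
Qed.

Lemma exists_unimodular_nonroot {C : numClosedFieldType} (Q : {poly C}) :
  Q != 0 -> exists2 z : C, `|z| = 1 & ~~ root Q z.
Proof.
move=> nzQ; have [/allP allroots | /allPn[z /mapP[n _ ->] nroot]] :=
  boolP (all (root Q) (map (cayley C) (iota 0 (size Q)))).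
- have := max_poly_roots nzQ (introT allP allroots).
  by rewrite (map_inj_uniq (@cayley_inj C)) iota_uniq size_map size_iota ltnn => /(_ isT).
- by exists (cayley C n); first exact: norm_cayley.
Qed.

Definition diag_pow {C : numClosedFieldType} n (z : C) : 'M[C]_n :=
  diag_mx (\row_(a < n) z ^+ a).

Lemma diag_pow_unitary {C : numClosedFieldType} {n} (z : C) :
  `|z| = 1 -> diag_unitary_mx (diag_pow n z).
Proof.
move=> z1; split=> [i j /negbTE nij | i]; rewrite !mxE ?nij ?mulr0n //.
by rewrite eqxx mulr1n normrX z1 expr1n.
Qed.

Section DiagInsertion.
Context {C : numClosedFieldType} {m n p : nat}.
Context (A : 'M[C]_(m, n)) (V : 'M[C]_(n, p)).

Definition entry_poly (k : 'I_m) (l : 'I_p) : {poly C} :=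
  \sum_(a < n) (A k a * V a l) *: 'X^a.

Lemma diag_pow_entry z k l : (A *m diag_pow n z *m V) k l = (entry_poly k l).[z].
Proof.
rewrite /entry_poly horner_sum mul_mx_diag !mxE.
by apply: eq_bigr => a _; rewrite !mxE hornerZ hornerXn mulrAC.
Qed.

Lemma entry_poly_neq0 k l : (entry_poly k l != 0) = rel_comp (mxsupp A) (mxsupp V) k l.
Proof.
rewrite /rel_comp; apply/idP/idP => [|/existsP[a /andP[Aka Val]]].
- apply: contraNT => /existsPn noa; apply/eqP/big1 => a _.
  move: (noa a); rewrite negb_and !negbK => /orP[] /eqP->;
  by rewrite ?mul0r ?mulr0 scale0r.
- apply: contraTneq Aka => e; rewrite /mxsupp.
  have := congr1 (fun q : {poly C} => q`_a) e.
  rewrite coef0 coef_sumMXn (big_pred1 a) => [/eqP|//].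
  by rewrite mulf_eq0 (negbTE Val) orbF negbK.
Qed.

Lemma exists_diag_pow_supp :
  exists2 z : C, `|z| = 1 &
    mxsupp (A *m diag_pow n z *m V) =2 rel_comp (mxsupp A) (mxsupp V).
Proof.
pose Q := \prod_(kl : 'I_m * 'I_p | entry_poly kl.1 kl.2 != 0) entry_poly kl.1 kl.2.
have [|z z1 nroot] := @exists_unimodular_nonroot C Q.
  by apply/prodf_neq0 => kl.
exists z => // k l; rewrite /mxsupp diag_pow_entry -entry_poly_neq0.
have [->|nz] := eqVneq (entry_poly k l) 0; first by rewrite horner0 eqxx.
apply: contra nroot => /eqP qz; rewrite /root /Q horner_prod.
by apply/prodf_eq0; exists (k, l); rewrite //= qz.
Qed.

End DiagInsertion.

Lemma foldr_alt_prod {C : numClosedFieldType} {d} (U : 'M[C]_d) (D : nat -> 'M[C]_d)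
    s (X : 'M[C]_d) :
  foldr (fun i A => D (2 * i)%N *m adjmx U *m D (2 * i).+1 *m U *m A) X s =
  foldr (fun i A => D (2 * i)%N *m adjmx U *m D (2 * i).+1 *m U *m A) 1%:M s *m X.
Proof. by elim: s => [|i s IH] /=; rewrite ?mul1mx // IH mulmxA. Qed.

Lemma alt_prodS {C : numClosedFieldType} {d} (U : 'M[C]_d) (D : nat -> 'M[C]_d) M :
  alt_prod U D M.+1 = alt_prod U D M *m D (2 * M)%N *m adjmx U *m D (2 * M).+1 *m U.
Proof.
rewrite /alt_prod -[M.+1]addn1 iotaD foldr_cat /= foldr_alt_prod mulmx1.
by rewrite !mulmxA.
Qed.

Lemma eq_alt_prod {C : numClosedFieldType} {d} (U : 'M[C]_d) {D D' : nat -> 'M[C]_d} {M} :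
  (forall n, (n < 2 * M)%N -> D n = D' n) -> alt_prod U D M = alt_prod U D' M.
Proof.
elim: M => [//|M IH] eqD; rewrite !alt_prodS IH => [|n ltn]; last by apply: eqD; lia.
by rewrite !eqD //; lia.
Qed.

Lemma exists_alt_prod_supp {C : numClosedFieldType} {d} (U : 'M[C]_d) M :
  exists D : nat -> 'M[C]_d,
    (forall n, (n < 2 * M)%N -> diag_unitary_mx (D n)) /\
    mxsupp (mxpow_nat ((pattern_mx U)^T *m pattern_mx U) M) =2 mxsupp (alt_prod U D M).
Proof.
elim: M => [|M [D [unitD suppD]]].
  exists (fun=> 1%:M); split=> // k l; rewrite /mxsupp /alt_prod /= !mxE.
  by case: (k == l); rewrite ?oner_eq0 ?eqxx.
set A := alt_prod U D M.
have [z1 z1_1 supp1] := exists_diag_pow_supp A (adjmx U).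
have [z2 z2_1 supp2] := exists_diag_pow_supp (A *m diag_pow d z1 *m adjmx U) U.
pose D' n := if n == (2 * M)%N then diag_pow d z1
             else if n == (2 * M).+1 then diag_pow d z2 else D n.
have D'E n : (n < 2 * M)%N -> D' n = D n.
  by move=> ltn; rewrite /D'; case: eqP => [|_]; [lia | case: eqP => [|_] //; lia].
exists D'; split.
  move=> n ltn; rewrite /D'; case: eqP => [_|ne1]; first exact: diag_pow_unitary.
  by case: eqP => [_|ne2]; [exact: diag_pow_unitary | apply: unitD; lia].
have -> : alt_prod U D' M.+1 = A *m diag_pow d z1 *m adjmx U *m diag_pow d z2 *m U.
  rewrite alt_prodS (eq_alt_prod U D'E) /D' eqxx ifN_eq; last by apply/eqP; lia.
  by rewrite eqxx.
move=> k l; rewrite [mxpow_nat _ _]/= mxsupp_nat_mul supp2.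
rewrite (eq_rel_comp suppD (mxsupp_pattern_gram U)) rel_compA.
by apply: eq_rel_comp => // i j; rewrite supp1.
Qed.

Theorem lemma24 (C : numClosedFieldType) (d : nat) (U : 'M[C]_d)
  (hU : unitary_mx U) (M : nat) :
  exists D : nat -> 'M[C]_d,
    (forall n, (n < 2 * M)%N -> diag_unitary_mx (D n)) /\
    forall k l : 'I_d,
      (mxpow_nat ((pattern_mx U)^T *m pattern_mx U) M) k l = 0%N <->
      (alt_prod U D M) k l = 0.
Proof.
have [D [unitD suppD]] := exists_alt_prod_supp U M.
exists D; split=> // k l.
move: (suppD k l); rewrite /mxsupp => /negb_inj eq0.
by split=> e; apply/eqP; [rewrite -eq0 | rewrite eq0]; apply/eqP.
Qed.
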